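(* Let $\alpha,\beta,\gamma,\delta\in\mathbb{R}$ with $\alpha+\delta\neq 0$ and $\alpha\gamma=0$, and let $G_7$ be the connected, simply connected Lie group whose Lie algebra $\mathfrak{g}_7$ has a basis $\{e_1,e_2,e_3\}$ with $[e_1,e_2]=-\alpha e_1-\beta e_2-\beta e_3$, $[e_1,e_3]=\alpha e_1+\beta e_2+\beta e_3$, $[e_2,e_3]=\gamma e_1+\delta e_2+\delta e_3$, equipped with the left-invariant Lorentzian metric $g$ for which $\{e_1,e_2,e_3\}$ is pseudo-orthonormal with $e_3$ timelike, and with the product structure $J$. Let $\lambda_0,c\in\mathbb{R}$. Then there exists a derivation $D$ of $\mathfrak{g}_7$ with $\widetilde{\mathrm{Ric}}^0=(s^0\lambda_0+c)\mathrm{Id}+D$ (i.e. $(G_7,g,J)$ is an algebraic Schouten soliton associated to the canonical connection $\nabla^0$) if and only if one of the following holds: (i) $\alpha=\gamma=0$, $\delta\neq0$ and $c=0$; (ii) $\alpha\neq0$, $\beta=\gamma=0$, $\alpha+\delta\neq0$ and $c=-\frac12\alpha^2+2\alpha^2\lambda_0$.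
   Context: Pseudo-orthonormal means $g(e_1,e_1)=g(e_2,e_2)=1$, $g(e_3,e_3)=-1$, $g(e_i,e_j)=0$ for $i\neq j$; left-invariant tensors are identified with their values on $\mathfrak{g}$. $\nabla$ is the Levi-Civita connection of $g$. The product structure $J$ is the left-invariant endomorphism with $Je_1=e_1$, $Je_2=e_2$, $Je_3=-e_3$. The canonical connection is $\nabla^0_XY=\nabla_XY-\frac12(\nabla_XJ)JY$, and the Kobayashi–Nomizu connection is $\nabla^1_XY=\nabla^0_XY-\frac14[(\nabla_YJ)JX-(\nabla_{JY}J)X]$. For $k=0,1$: $R^k(X,Y)Z=\nabla^k_X\nabla^k_YZ-\nabla^k_Y\nabla^k_XZ-\nabla^k_{[X,Y]}Z$; $\rho^k(X,Y)=-g(R^k(X,e_1)Y,e_1)-g(R^k(X,e_2)Y,e_2)+g(R^k(X,e_3)Y,e_3)$; $\widetilde\rho^k(X,Y)=\frac12(\rho^k(X,Y)+\rho^k(Y,X))$; $\widetilde{\mathrm{Ric}}^k$ is defined by $\widetilde\rho^k(X,Y)=g(\widetilde{\mathrm{Ric}}^k(X),Y)$; and $s^k=\widetilde\rho^k(e_1,e_1)+\widetilde\rho^k(e_2,e_2)-\widetilde\rho^k(e_3,e_3)$. A derivation of $\mathfrak{g}$ is a linear map $D$ with $D[X,Y]=[DX,Y]+[X,DY]$. $(G,g,J)$ is an algebraic Schouten soliton associated to $\nabla^k$ (with real constants $\lambda_0,c$) if $\widetilde{\mathrm{Ric}}^k=(s^k\lambda_0+c)\mathrm{Id}+D$ for some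 derivation $D$. *)

From HB Require Import structures.
From mathcomp Require Import all_boot all_order all_algebra.
From mathcomp Require Import reals.
Set Implicit Arguments. Unset Strict Implicit. Unset Printing Implicit Defensive.
Import Order.TTheory GRing.Theory Num.Theory.
Local Open Scope ring_scope.

(* Three-dimensional real Lie algebra g = R^3, elements are row vectors
   'rV[R]_3 written in the basis {e_1,e_2,e_3} = {e 0, e 1, e 2}.
   Left-invariant tensors are identified with their values on g.
   Linear endomorphisms of g are matrices M acting by  X |-> X *m M. *)

Section Schouten.
Variable R : realType.
Notation vec := 'rV[R]_3.

Definition e (i : 'I_3) : vec := delta_mx 0 i.
Definition coord (x : vec) (i : 'I_3) : R := x 0 i.

Definition eps (i : 'I_3) : R := if (i : nat) == 2%N then -1 else 1.

Definition gm (x y : vec) : R := \sum_(i < 3) eps i * coord x i * coord y i.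

Definition bracket_of (b : 'I_3 -> 'I_3 -> vec) (x y : vec) : vec :=
  \sum_(i < 3) \sum_(j < 3) (coord x i * coord y j) *: b i j.

(* Levi-Civita connection of a left-invariant metric (Koszul formula):
   g(nabla_X Y, Z) = 1/2 (g([X,Y],Z) - g([Y,Z],X) + g([Z,X],Y)) *)
Definition nablaLC (br : vec -> vec -> vec) (X Y : vec) : vec :=
  \sum_(k < 3) (eps k * (2^-1 * (gm (br X Y) (e k) - gm (br Y (e k)) X
                                 + gm (br (e k) X) Y))) *: e k.

Definition Jp (x : vec) : vec := \row_(i < 3) (eps i * coord x i).

Definition nablaJ br (X Y : vec) : vec :=
  nablaLC br X (Jp Y) - Jp (nablaLC br X Y).

Definition nabla0 br (X Y : vec) : vec :=
  nablaLC br X Y - 2^-1 *: nablaJ br X (Jp Y).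

Definition curv0 br (X Y Z : vec) : vec :=
  nabla0 br X (nabla0 br Y Z) - nabla0 br Y (nabla0 br X Z)
  - nabla0 br (br X Y) Z.

Definition rho0 br (X Y : vec) : R :=
  - gm (curv0 br X (e 0) Y) (e 0) - gm (curv0 br X (e 1) Y) (e 1)
  + gm (curv0 br X (e 2) Y) (e 2).

Definition rhot0 br (X Y : vec) : R := 2^-1 * (rho0 br X Y + rho0 br Y X).

(* Ricci operator: the unique endomorphism with rhot0(X,Y) = g(Ric X, Y) *)
Definition Ric0 br (X : vec) : vec :=
  \sum_(k < 3) (eps k * rhot0 br X (e k)) *: e k.

Definition scal0 br : R :=
  rhot0 br (e 0) (e 0) + rhot0 br (e 1) (e 1) - rhot0 br (e 2) (e 2).

Definition is_derivation (br : vec -> vec -> vec) (D : 'M[R]_3) : Prop :=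
  forall X Y : vec, br X Y *m D = br (X *m D) Y + br X (Y *m D).

Definition algebraic_schouten_soliton0 br (lambda0 c : R) : Prop :=
  exists D : 'M[R]_3, is_derivation br D /\
    forall X : vec, Ric0 br X = (scal0 br * lambda0 + c) *: X + X *m D.

Definition row3 (a b c : R) : vec := \row_(i < 3) nth 0 [:: a; b; c] i.

Definition g7_basis (al be ga de : R) (i j : 'I_3) : vec :=
  match (i : nat), (j : nat) with
  | 0, 1 => row3 (- al) (- be) (- be)
  | 1, 0 => - row3 (- al) (- be) (- be)
  | 0, 2 => row3 al be be
  | 2, 0 => - row3 al be be
  | 1, 2 => row3 ga de de
  | 2, 1 => - row3 ga de de
  | _, _ => 0
  end.

Definition g7_bracket (al be ga de : R) : vec -> vec -> vec :=
  bracket_of (g7_basis al be ga de).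

End Schouten.

(* On g_7 the canonical connection is nabla^0_X = w(X) rho, where rho is the
   infinitesimal rotation of the spacelike plane <e_1, e_2> and w is a 1-form.
   Hence R^0(X,Y) = - w([X,Y]) rho, and the Ricci operator depends on the two
   numbers a = al^2 + be ga / 2 and b = al ga / 2 + ga de / 4, with s^0 = -2a.
   Since Ric^0 is linear, the soliton equation says that Ric^0 - mu Id is a
   derivation, where mu = s^0 lambda0 + c. When al + de <> 0 this holds iff
   b = 0, mu = -a/2 and be a = ga a = 0. The hypothesis al ga = 0 then splits
   this condition into the two cases of the statement. *)

From Pilot Require Import Defs.
From HB Require Import structures.
From mathcomp Require Import all_boot all_order all_algebra.
From mathcomp Require Import reals ring lra.
Import Order.TTheory GRing.Theory Num.Theory.
Local Open Scope ring_scope.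

Notation i0 := (@Ordinal 3 0 isT).
Notation i1 := (@Ordinal 3 1 isT).
Notation i2 := (@Ordinal 3 2 isT).

Lemma big_ord3 (V : nmodType) (f : 'I_3 -> V) : \sum_(i < 3) f i = f i0 + f i1 + f i2.
Proof. by rewrite !big_ord_recr big_ord0 /= add0r; congr (f _ + f _ + f _); apply: val_inj. Qed.

Section Coordinates.
Variable R : realType.
Implicit Types (v w X Y : 'rV[R]_3).

Lemma eq_rV3 v w : v 0 i0 = w 0 i0 -> v 0 i1 = w 0 i1 -> v 0 i2 = w 0 i2 -> v = w.
Proof.
by move=> h0 h1 h2; apply/rowP => -[[|[|[|//]]] Hi]; rewrite (bool_irrelevance Hi isT).
Qed.

Lemma e0E : e R i0 = row3 1 0 0. Proof. by apply: eq_rV3; rewrite !mxE. Qed.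
Lemma e1E : e R i1 = row3 0 1 0. Proof. by apply: eq_rV3; rewrite !mxE. Qed.
Lemma e2E : e R i2 = row3 0 0 1. Proof. by apply: eq_rV3; rewrite !mxE. Qed.

Lemma gmE X Y : gm X Y = X 0 i0 * Y 0 i0 + X 0 i1 * Y 0 i1 - X 0 i2 * Y 0 i2.
Proof. by rewrite /gm big_ord3 /eps /Defs.coord /=; ring. Qed.

Lemma JpE X : Jp X = row3 (X 0 i0) (X 0 i1) (- X 0 i2).
Proof. by apply: eq_rV3; rewrite !mxE /Defs.coord /eps /=; ring. Qed.

(* In ['I_3] the numeral 2 is [1 + 1]: rewrite it before 1. *)
Lemma ord3_2E : 2 = i2 :> 'I_3. Proof. exact: val_inj. Qed.
Lemma ord3_1E : 1 = i1 :> 'I_3. Proof. exact: val_inj. Qed.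
Lemma ord3_0E : 0 = i0 :> 'I_3. Proof. exact: val_inj. Qed.

End Coordinates.

Lemma soliton0_iff_derivation (R : realType) (br : 'rV[R]_3 -> 'rV[R]_3 -> 'rV[R]_3)
    (lambda0 c : R) :
  (forall X, X *m lin1_mx (Ric0 br) = Ric0 br X) ->
  algebraic_schouten_soliton0 br lambda0 c <->
  is_derivation br (lin1_mx (Ric0 br) - (scal0 br * lambda0 + c)%:M).
Proof.
move=> RicE; split=> [[D [derD solD]] | derD].
- suff -> : lin1_mx (Ric0 br) - (scal0 br * lambda0 + c)%:M = D by [].
  apply/row_matrixP => i; rewrite !rowE mulmxBr mul_mx_scalar RicE solD.
  by rewrite addrC addKr.
- exists (lin1_mx (Ric0 br) - (scal0 br * lambda0 + c)%:M); split=> // X.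
  by rewrite mulmxBr mul_mx_scalar RicE addrC subrK.
Qed.

Definition wedge {R : realType} (X Y : 'rV[R]_3) (i j : 'I_3) : R :=
  X 0 i * Y 0 j - X 0 j * Y 0 i.

Section G7.
Variables (R : realType) (al be ga de : R).
Local Notation br := (g7_bracket al be ga de).
Implicit Types (X Y Z : 'rV[R]_3).

Lemma g7_bracketE X Y :
  br X Y = row3 (al * (wedge X Y i0 i2 - wedge X Y i0 i1) + ga * wedge X Y i1 i2)
                (be * (wedge X Y i0 i2 - wedge X Y i0 i1) + de * wedge X Y i1 i2)
                (be * (wedge X Y i0 i2 - wedge X Y i0 i1) + de * wedge X Y i1 i2).
Proof.
by rewrite /g7_bracket /bracket_of /Defs.coord /wedge !big_ord3; apply: eq_rV3; rewrite !mxE /=; ring.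
Qed.

Lemma g7_nablaLCE X Y :
  let x0 := X 0 i0 in let x1 := X 0 i1 in let x2 := X 0 i2 in
  let y0 := Y 0 i0 in let y1 := Y 0 i1 in let y2 := Y 0 i2 in
  nablaLC br X Y =
  row3 (ga / 2 * (x1 * y2 - x2 * y1) + be * (x2 - x1) * (y1 - y2) + al * x0 * (y2 - y1))
       (de * (x1 - x2) * y2 + ga / 2 * (x2 * y0 + x0 * y2) + be * (x1 - x2) * y0 + al * x0 * y0)
       (de * (x1 - x2) * y1 + ga / 2 * (x1 * y0 + x0 * y1) + be * (x1 - x2) * y0 + al * x0 * y0).
Proof.
rewrite /nablaLC !big_ord3 !g7_bracketE !gmE !e0E !e1E !e2E /eps /=.
by apply: eq_rV3; rewrite !mxE /= /wedge !mxE /=; field.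
Qed.

Definition conn_form X : R := al * X 0 i0 + be * X 0 i1 + (ga / 2 - be) * X 0 i2.
Definition rot12 Y : 'rV[R]_3 := row3 (- Y 0 i1) (Y 0 i0) 0.

Lemma g7_nabla0E X Y : nabla0 br X Y = conn_form X *: rot12 Y.
Proof.
rewrite /nabla0 /nablaJ !JpE !g7_nablaLCE.
by apply: eq_rV3; rewrite !mxE /= /conn_form; field.
Qed.

(* The rotations [rot12] commute, so only the [nabla^0_[X,Y]] term survives. *)
Lemma g7_curv0E X Y Z : curv0 br X Y Z = - conn_form (br X Y) *: rot12 Z.
Proof. by rewrite /curv0 !g7_nabla0E; apply: eq_rV3; rewrite !mxE /=; ring. Qed.

Definition ric_a : R := al ^+ 2 + be * ga / 2.
Definition ric_b : R := al * ga / 2 + ga * de / 4.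

Lemma g7_rho0E X Y :
  rho0 br X Y = ric_a * ((X 0 i2 - X 0 i1) * Y 0 i1 - X 0 i0 * Y 0 i0)
                - 2 * ric_b * X 0 i2 * Y 0 i0.
Proof.
rewrite /rho0 ord3_2E ord3_1E ord3_0E !g7_curv0E !gmE !g7_bracketE !e0E !e1E !e2E.
by rewrite /conn_form /ric_a /ric_b !mxE /= /wedge !mxE /=; field.
Qed.

Lemma g7_Ric0E X :
  Ric0 br X = row3 (- ric_a * X 0 i0 - ric_b * X 0 i2)
                   (- ric_a * X 0 i1 + ric_a / 2 * X 0 i2)
                   (ric_b * X 0 i0 - ric_a / 2 * X 0 i1).
Proof.
rewrite /Ric0 /rhot0 big_ord3 !g7_rho0E /eps /= !e0E !e1E !e2E.
by apply: eq_rV3; rewrite !mxE /=; field.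
Qed.

Lemma g7_scal0E : scal0 br = - 2 * ric_a.
Proof.
rewrite /scal0 /rhot0 ord3_2E ord3_1E ord3_0E !g7_rho0E !e0E !e1E !e2E.
by rewrite !mxE /=; field.
Qed.

Lemma g7_Ric0_lin1 X : X *m lin1_mx (Ric0 br) = Ric0 br X.
Proof.
by apply: eq_rV3; rewrite !mxE !big_ord3 !mxE !g7_Ric0E !mxE /=; ring.
Qed.

(* In the basis e_1, f = e_2 + e_3, e_3 the only brackets are [e_1, e_3] = al e_1 + be f
   and [f, e_3] = ga e_1 + de f; the three vectors are the derivation defects on the
   pairs (e_1, f), (e_1, e_3), (f, e_3), and the scalars are the coordinates of X /\ Y. *)
Lemma g7_derivation_defectE (m : R) X Y :
  let D := lin1_mx (Ric0 br) - m%:M in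
  br X Y *m D - (br (X *m D) Y + br X (Y *m D)) =
    wedge X Y i0 i1 *: (ric_b *: row3 ga de de)
  + (wedge X Y i0 i2 - wedge X Y i0 i1) *:
      row3 (al * (m + ric_a / 2) - be * ric_b)
           (be * (m + ric_a / 2) + be * ric_a / 2)
           (be * (m + ric_a / 2) + be * ric_a / 2 + al * ric_b)
  + wedge X Y i1 i2 *:
      row3 (ga * (m + ric_a / 2) - ga * ric_a / 2 + (al - de) * ric_b)
           (de * (m + ric_a / 2) + be * ric_b)
           (de * (m + ric_a / 2) + be * ric_b + ga * ric_b).
Proof.
move=> D; have DE Z : Z *m D = Ric0 br Z - m *: Z.
  by rewrite mulmxBr mul_mx_scalar g7_Ric0_lin1.
rewrite !DE !g7_Ric0E !g7_bracketE.
by apply: eq_rV3; rewrite !mxE /= /wedge !mxE /=; field.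
Qed.

Lemma g7_Ric_shift_derivationP (m : R) : al + de != 0 ->
  is_derivation br (lin1_mx (Ric0 br) - m%:M) <->
  [/\ ric_b = 0, m = - (ric_a / 2), be * ric_a = 0 & ga * ric_a = 0].
Proof.
move=> hs; split=> [derD | [hb hm hbe hga] X Y]; last first.
  apply/subr0_eq; rewrite g7_derivation_defectE hb hm !addNr hbe hga.
  by apply: eq_rV3; rewrite !mxE /=; ring.
set D := lin1_mx (Ric0 br) - m%:M.
have defect0 X Y i : (br X Y *m D - (br (X *m D) Y + br X (Y *m D))) 0 i = 0.
  by rewrite derD subrr mxE.
pose f : 'rV[R]_3 := row3 0 1 1.
move: (defect0 (row3 1 0 0) f i1) (defect0 (row3 1 0 0) (row3 0 0 1) i0).
move: (defect0 (row3 1 0 0) (row3 0 0 1) i1) (defect0 (row3 1 0 0) (row3 0 0 1) i2).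
move: (defect0 f (row3 0 0 1) i0) (defect0 f (row3 0 0 1) i1).
rewrite !g7_derivation_defectE /wedge !mxE /= => h12_0 h12_1 h02_1 h02_2 h01 h02_0.
have hb : ric_b = 0.
  by apply: (mulIf hs); rewrite mul0r; lra.
have hm : m = - (ric_a / 2).
  by apply: (mulIf hs); rewrite hb in h12_1 h02_0; lra.
by split=> //; rewrite hb hm in h12_0 h02_1; lra.
Qed.

End G7.

Theorem theorem4p14 (R : realType) (al be ga de lambda0 c : R) :
  al + de != 0 -> al * ga = 0 ->
  (algebraic_schouten_soliton0 (g7_bracket al be ga de) lambda0 c <->
   ((al = 0 /\ ga = 0 /\ de != 0 /\ c = 0) \/
    (al != 0 /\ be = 0 /\ ga = 0 /\ al + de != 0 /\
     c = - 2^-1 * al ^+ 2 + 2 * al ^+ 2 * lambda0))).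
Proof.
move=> hs hag; rewrite soliton0_iff_derivation; last exact: g7_Ric0_lin1.
rewrite g7_scal0E g7_Ric_shift_derivationP // /ric_a /ric_b.
have [al0 | al_neq0] := eqVneq al 0.
- have de_neq0 : de != 0 by rewrite al0 add0r in hs.
  rewrite al0; split=> [[hb hc _ _] | [[_ [ga0 [_ c0]]] | [/negP[]]]] //.
  + have ga0 : ga = 0 by apply: (mulIf de_neq0); rewrite mul0r; lra.
    by left; rewrite ga0 in hc; do !split=> //; lra.
  + by rewrite ga0 c0; split; ring.
- have ga0 : ga = 0 by apply: (mulfI al_neq0); rewrite mulr0.
  rewrite ga0; split=> [[_ hc hbe _] | [[al0 _] | [_ [be0 [_ [_ c0]]]]]].
  + have be0 : be = 0 by apply: (mulIf (expf_neq0 2 al_neq0)); rewrite mul0r; lra.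
    by right; do !split=> //; rewrite be0 in hc; lra.
  + by rewrite al0 eqxx in al_neq0.
  + by rewrite be0 c0; split; ring.
Qed.
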